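(* $$\liminf_{a,b\to\infty} r(a,b)=1,$$ where the limit inferior is taken as $\min(a,b)\to\infty$ over pairs of positive integers $(a,b)$.
   Context: $\phi$ denotes Euler's totient function. For positive integers $a,b$, $c(a,b)$ is the least positive integer $c$ such that $\phi(a!)\,\phi(b!)$ divides $\phi(c!)$, and $r(a,b)=c(a,b)/(a+b)$. *)

From mathcomp Require Import all_boot all_order all_algebra.
From Stdlib Require Import ClassicalEpsilon.
Set Implicit Arguments. Unset Strict Implicit. Unset Printing Implicit Defensive.
Import Order.TTheory GRing.Theory Num.Theory.

Definition c_adm (a b : nat) : pred nat :=
  fun c => (0 < c) && (totient a`! * totient b`! %| totient c`!).

(* c(a,b): least positive c with phi(a!)phi(b!) | phi(c!)
   (such c always exists; the default 0 is never used) *)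
Definition c_ab (a b : nat) : nat :=
  match excluded_middle_informative (exists c, c_adm a b c) with
  | left H => ex_minn H
  | right _ => 0
  end.

Definition r_ab (a b : nat) : rat := ((c_ab a b)%:R / (a + b)%:R)%R.

From mathcomp Require Import all_boot all_order all_algebra zify ring lra.
From Stdlib Require Import ClassicalEpsilon.
Set Implicit Arguments. Unset Strict Implicit. Unset Printing Implicit Defensive.
Import Order.TTheory GRing.Theory Num.Theory.

(* Upper bound: for L > phi(N!) the prime gap after L!+1 forces
   c(N, L!+1) <= L!+1+phi(N!), and phi(N!) is negligible against L!+1.
   Lower bound: compare 2-adic valuations.  v_2(n!) = n - O(n / 2^K + K) and
   v_2(phi(n!)) = v_2(n!) - 1 + sum_(p <= n prime) v_2(p - 1); the latter sum
   is at most K pi(c) + c / 2^K, and pi(c) = O(c / K^2) + O_K(1) by Chebyshev's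
   bound.  So a + b <= (1 + O(1/K)) c + O_K(1). *)

Lemma prime_dvd_fact p n : prime p -> (p %| n`!) = (p <= n).
Proof.
move=> p_pr; apply/idP/idP => [|le_pn]; last by rewrite dvdn_fact ?prime_gt0.
elim: n => [|n IHn]; first by rewrite fact0 gtnNdvd ?prime_gt1.
by rewrite factS Euclid_dvdM // => /orP[/dvdn_leq-> // | /IHn/leqW].
Qed.

Lemma totient_mul_pdvd p m : prime p -> p %| m -> totient (p * m) = p * totient m.
Proof.
move=> p_pr p_dvd_m; have [->|m_gt0] := posnP m; first by rewrite muln0.
have [q p'q def_m] := pfactor_coprime p_pr m_gt0.
have e_gt0 : 0 < logn p m by rewrite -(pfactor_dvdn 1 p_pr m_gt0) expn1.
have q_coprime k : coprime q (p ^ k) by rewrite coprime_sym coprimeXl.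
set e := logn p m in def_m e_gt0 *.
rewrite def_m mulnCA -expnS !totient_coprime // !totient_pfactor //.
by case: e e_gt0 {def_m} => // e _ /=; rewrite expnS; ring.
Qed.

Lemma totientM_primes j n : (forall p, prime p -> p %| j -> p %| n) ->
  totient (j * n) = j * totient n.
Proof.
elim/ltn_ind: j => j IHj j_primes.
have [j_le1|j_gt1] := leqP j 1.
  case: j j_le1 {IHj j_primes} => [|[|]] // _; last by rewrite !mul1n.
have [p p_pr p_dvd_j] := pdivP j_gt1.
have def_j : j = p * (j %/ p) by rewrite mulnC divnK.
rewrite def_j -mulnA totient_mul_pdvd ?dvdn_mull ?j_primes // IHj ?mulnA //.
  by rewrite ltn_Pdiv ?prime_gt1 // ltnW.
by move=> q q_pr q_dvd; apply: j_primes; rewrite // def_j dvdn_mull.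
Qed.

Lemma totient_factS n :
  totient n.+1`! = (if prime n.+1 then n else n.+1) * totient n`!.
Proof.
rewrite factS; case: ifP => [n1_pr | n1_npr].
  by rewrite totient_coprime ?prime_coprime ?prime_dvd_fact ?ltnn // totient_prime.
apply: totientM_primes => q q_pr q_dvd; rewrite prime_dvd_fact //.
rewrite -ltnS ltn_neqAle dvdn_leq // andbT; apply/eqP => def_q.
by rewrite -def_q q_pr in n1_npr.
Qed.

Lemma dvdn_totient_fact m n : m <= n -> totient m`! %| totient n`!.
Proof.
elim: n => [|n IHn]; first by rewrite leqn0 => /eqP->.
rewrite leq_eqVlt ltnS => /orP[/eqP-> // | /IHn].
by rewrite totient_factS; apply: dvdn_mull.
Qed.

Lemma totient_fact_ffact m t :
  (forall i, m < i <= m + t -> ~~ prime i) ->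
  totient (m + t)`! = totient m`! * (m + t) ^_ t.
Proof.
elim: t => [|t IHt] no_prime; first by rewrite addn0 muln1.
have npr : ~~ prime (m + t).+1 by apply: no_prime; lia.
rewrite addnS totient_factS (negbTE npr) ffactSS IHt; first by ring.
by move=> i /andP[lt_mi le_i]; apply: no_prime; rewrite lt_mi /=; lia.
Qed.

Lemma fact_addn_not_prime L j : 1 < j <= L -> ~~ prime (L`! + j).
Proof.
case/andP=> j_gt1 le_jL; apply/negP => /primeP[_ /(_ j)].
rewrite dvdn_addr ?dvdnn; last by rewrite dvdn_fact // ltnW.
move=> /(_ isT) /orP[/eqP j1 | /eqP def_j]; first by rewrite j1 in j_gt1.
by have := fact_gt0 L; lia.
Qed.

(* L!+2, ..., L!+L are composite, so for k = phi(a!) < L the block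
   (L!+1, L!+1+k] contributes the factor (L!+1+k)^_k, a multiple of k!. *)
Lemma c_adm_fact_gap a b L : totient a`! < L -> b <= L`!.+1 ->
  c_adm a b (L`!.+1 + totient a`!).
Proof.
set k := totient a`!; set B := L`!.+1 => lt_kL le_bB.
have no_prime i : B < i <= B + k -> ~~ prime i.
  move=> /andP[lt_Bi le_i]; rewrite -(subnKC (ltnW lt_Bi)) /B addSnnS.
  by apply: fact_addn_not_prime; lia.
apply/andP; split; first by rewrite addSn.
rewrite totient_fact_ffact // mulnC dvdn_mul ?dvdn_totient_fact //.
rewrite -bin_ffact dvdn_mull // dvdn_fact // leqnn andbT.
by rewrite totient_gt0 fact_gt0.
Qed.

Lemma c_ab_spec a b :
  c_adm a b (c_ab a b) /\ forall c, c_adm a b c -> c_ab a b <= c.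
Proof.
rewrite /c_ab; case: excluded_middle_informative => [c_ex | []].
  by case: ex_minnP.
exists ((totient a`! + b).+1`!.+1 + totient a`!); apply: c_adm_fact_gap.
  by rewrite ltnS leq_addr.
by apply/leqW/(leq_trans _ (fact_geq _)); lia.
Qed.

Lemma bin_leq_exp2 n k : 'C(n, k) <= 2 ^ n.
Proof.
elim: n k => [|n IHn] [|k] //; first by rewrite bin0 expn_gt0.
by rewrite binS expnS mul2n -addnn leq_add.
Qed.

Lemma prod_if_expn (P : pred nat) (s : seq nat) x :
  \prod_(i <- s) (if P i then x else 1) = x ^ (\sum_(i <- s) P i).
Proof.
elim: s => [|i s IHs]; first by rewrite !big_nil.
by rewrite !big_cons IHs expnD; case: (P i); rewrite ?mul1n.
Qed.

Lemma prod_central_primes_dvd m :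
  \prod_(m.+1 <= p < m.*2.+1) (if prime p then p else 1) %| 'C(m.*2, m).
Proof.
set P := \prod_(_ <= p < _) _; set Q := \prod_(m.+1 <= i < m.*2.+1) i.
have def_Q : Q = 'C(m.*2, m) * m`!.
  apply/eqP; rewrite -(eqn_pmul2l (fact_gt0 m)) -fact_split -?addnn ?leq_addr //.
  by rewrite -{1}(bin_fact (leq_addl m m)) addnK mulnCA.
have dvd_PQ : P %| Q.
  apply: (big_ind2 (fun x y => x %| y)) => // [x1 x2 y1 y2|p _].
    exact: dvdn_mul.
  by case: (prime p); rewrite ?dvd1n.
have coprime_P : coprime P m`!.
  rewrite /P big_nat; apply: (big_ind (fun x => coprime x m`!)) => [||p].
  - exact: coprime1n.
  - by move=> x y; rewrite coprimeMl => -> ->.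
  case/andP=> lt_mp _; case p_pr: (prime p); last exact: coprime1n.
  by rewrite prime_coprime // prime_dvd_fact // -ltnNge.
by rewrite -(Gauss_dvdl _ coprime_P) -def_Q.
Qed.

(* Chebyshev: every prime in (m, 2m] divides 'C(2m, m) <= 4^m. *)
Lemma central_primes_le m t : 2 ^ t <= m ->
  t * \sum_(m.+1 <= p < m.*2.+1) prime p <= m.*2.
Proof.
move=> le_2t_m; rewrite -(leq_exp2l _ _ (ltnSn 1)) expnM -prod_if_expn.
apply: leq_trans (bin_leq_exp2 _ m).
apply: leq_trans (dvdn_leq _ (prod_central_primes_dvd m)); last first.
  by rewrite bin_gt0 -addnn leq_addl.
rewrite big_nat [X in _ <= X]big_nat; apply: leq_prod => p /andP[lt_mp _].
by case: (prime p) => //; apply: leq_trans le_2t_m (ltnW lt_mp).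
Qed.

Definition primepi n := \sum_(0 <= p < n.+1) prime p.

Lemma primepi_double m :
  primepi m.*2 = primepi m + \sum_(m.+1 <= p < m.*2.+1) prime p.
Proof. by rewrite /primepi (@big_cat_nat _ _ _ m.+1) // ltnS -addnn leq_addr. Qed.

Lemma primepi_addn n r : primepi (n + r) <= primepi n + r.
Proof.
rewrite /primepi (@big_cat_nat _ _ _ n.+1) //= ?ltnS ?leq_addr // leq_add2l.
apply: (@leq_trans (\sum_(n.+1 <= p < (n + r).+1) 1)).
  by apply: leq_sum => p _; apply: leq_b1.
by rewrite sum_nat_const_nat muln1 subSS addKn.
Qed.

Lemma primepi_le n : primepi n <= n.
Proof. by have := primepi_addn 0 n; rewrite /primepi big_nat1. Qed.

(* Halving n, the central primes of (n/2, n] cost at most 2n/t by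
   central_primes_le, which sums to 4n/t over the dyadic scales above 2^t. *)
Lemma primepi_bound t n : t * primepi n <= t * 2 ^ t.+1 + 4 * n.
Proof.
elim/ltn_ind: n => n IHn.
have [le_n_2t | lt_2t_n] := leqP n (2 ^ t.+1).
  rewrite (leq_trans _ (leq_addr _ _)) // leq_mul2l.
  by rewrite (leq_trans (primepi_le n)) ?orbT.
set m := n./2.
have def_n : n = m.*2 + odd n by rewrite addnC odd_double_half.
have le_2t_m : 2 ^ t <= m by move: lt_2t_n; rewrite expnS /m; lia.
have lt_mn : m < n by have := expn_gt0 2 t; lia.
have central := central_primes_le le_2t_m.
have split_pi :
    t * primepi n <= t * (primepi m + \sum_(m.+1 <= p < m.*2.+1) prime p + 1).
  have := primepi_addn m.*2 (odd n); rewrite -def_n primepi_double => le_pi.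
  by rewrite leq_mul2l (leq_trans le_pi) ?leq_add2l ?leq_b1 ?orbT.
have le_tm : t <= m := leq_trans (ltnW (ltn_expl t (ltnSn 1))) le_2t_m.
have := IHn m lt_mn; move: central split_pi def_n; rewrite -!mul2n; clearbody m; nia.
Qed.

Lemma sum_div_exp2_le c J d :
  \sum_(J.+1 <= k < (J + d).+1) c %/ 2 ^ k + c %/ 2 ^ (J + d) <= c %/ 2 ^ J.
Proof.
elim: d => [|d IHd]; first by rewrite addn0 big_geq.
rewrite addnS big_nat_recr /= ?ltnS ?leq_addr // expnSr divnMA -addnA.
apply: leq_trans IHd; rewrite leq_add2l addnn -mul2n mulnC; exact: leq_divM.
Qed.

Lemma leq_sum_div_exp2 n K :
  n <= \sum_(1 <= k < K.+1) n %/ 2 ^ k + n %/ 2 ^ K + K.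
Proof.
elim: K => [|K IHK]; first by rewrite big_geq // expn0 divn1 addn0.
rewrite big_nat_recr //= expnSr divnMA; apply: leq_trans IHK _.
have := divn_eq (n %/ 2 ^ K) 2; have := ltn_pmod (n %/ 2 ^ K) (ltn0Sn 1); lia.
Qed.

Lemma logn2_fact_le n : logn 2 n`! <= n.
Proof.
rewrite logn_fact //; have := sum_div_exp2_le n 0 n.
by rewrite add0n expn0 divn1; apply: leq_trans; apply: leq_addr.
Qed.

Lemma logn2_fact_ge n K : K <= n -> n <= logn 2 n`! + n %/ 2 ^ K + K.
Proof.
move=> le_Kn; rewrite logn_fact //; apply: leq_trans (leq_sum_div_exp2 n K) _.
by rewrite !leq_add2r (@big_cat_nat _ _ _ K.+1 1 n.+1) //= leq_addr.
Qed.

Definition log2_pred_primes n :=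
  \sum_(0 <= p < n.+1) (if prime p then logn 2 p.-1 else 0).

(* phi(n!) = n! * prod_(p <= n) (p - 1) / p, and only p = 2 removes a factor 2. *)
Lemma logn2_totient_fact n :
  logn 2 (totient n`!) + (1 < n) = logn 2 n`! + log2_pred_primes n.
Proof.
elim: n => [|n IHn]; first by rewrite /log2_pred_primes big_nat1.
have phi_gt0 : 0 < totient n`! by rewrite totient_gt0 fact_gt0.
rewrite totient_factS factS /log2_pred_primes big_nat_recr //=.
rewrite -/(log2_pred_primes n).
case: ifP => n1_pr.
  have n_gt0 : 0 < n by have := prime_gt1 n1_pr; lia.
  rewrite !lognM ?fact_gt0 //.
  have [n1 | n_ne1] := eqVneq n 1.
    by move: IHn; rewrite n1 logn1 (@logn_prime 2 2) //=; lia.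
  have n_gt1 : 1 < n by lia.
  rewrite (@logn_coprime 2 n.+1) ?prime_coprime ?dvdn_prime2 //; first lia.
  by apply: contraNneq n_ne1 => -[->].
have n_ne1 : n != 1 by apply: contraFN n1_pr => /eqP->.
have -> : (1 < n.+1) = (1 < n) by case: n n_ne1 {IHn phi_gt0 n1_pr} => [|[]].
by rewrite !lognM ?fact_gt0 // addn0 -!addnA IHn.
Qed.

Lemma count_dvdn d n : 0 < d -> \sum_(0 <= i < n.+1) ((0 < i) && (d %| i)) = n %/ d.
Proof.
move=> d_gt0; elim: n => [|n IHn]; first by rewrite big_nat1 div0n.
by rewrite big_nat_recr //= IHn divnS // addnC.
Qed.

Lemma sum_prime_dvd_pred d n : 0 < d ->
  \sum_(0 <= p < n.+1) (prime p && (d %| p.-1)) <= n %/ d.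
Proof.
move=> d_gt0; rewrite -(count_dvdn n d_gt0) big_nat_recl //= big_nat_recr //=.
rewrite add0n (leq_trans _ (leq_addr _ _)) //; apply: leq_sum => -[|i] _ //=.
by case: (prime i.+2).
Qed.

Lemma logn2_le_split J n x : x <= n ->
  logn 2 x <= J + \sum_(J.+1 <= k < (J + n).+1) (2 ^ k %| x).
Proof.
move=> le_xn; have [->|x_gt0] := posnP x; first by rewrite logn0.
rewrite logn_count_dvd //.
apply: (@leq_trans (\sum_(1 <= k < (J + n).+1) (2 ^ k %| x))).
  rewrite [X in _ <= X](@big_cat_nat _ _ _ x) //=; [exact: leq_addr | lia].
rewrite (@big_cat_nat _ _ _ J.+1) //= ?leq_add2r; last lia.
apply: (@leq_trans (\sum_(1 <= k < J.+1) 1)).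
  by apply: leq_sum => k _; exact: leq_b1.
by rewrite sum_nat_const_nat muln1 subn1.
Qed.

(* v_2(p - 1) <= J + #{k > J | 2^k %| p - 1}, and for each such k at most
   n / 2^k primes p <= n qualify. *)
Lemma log2_pred_primes_le J n :
  log2_pred_primes n <= J * primepi n + n %/ 2 ^ J.
Proof.
pose F p k := prime p && (2 ^ k %| p.-1).
have split_log2 : log2_pred_primes n <=
    \sum_(0 <= p < n.+1) (prime p * J + \sum_(J.+1 <= k < (J + n).+1) F p k).
  rewrite /log2_pred_primes big_nat [X in _ <= X]big_nat.
  apply: leq_sum => p /andP[_ lt_pn]; rewrite /F.
  by case: (prime p) => //=; rewrite mul1n logn2_le_split //; lia.
apply: leq_trans split_log2 _.
rewrite big_split /= -big_distrl /= mulnC leq_add2l exchange_big_nat /=.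
apply: leq_trans (leq_trans _ (leq_addr (n %/ 2 ^ (J + n)) _)) (sum_div_exp2_le n J n).
by apply: leq_sum => k _; apply: sum_prime_dvd_pred; rewrite expn_gt0.
Qed.

(* Compare 2-adic valuations on both sides of phi(a!) phi(b!) | phi(c!). *)
Lemma c_adm_logn2 K a b c : K <= a -> K <= b -> c_adm a b c ->
  a + b <= c + log2_pred_primes c + a %/ 2 ^ K + b %/ 2 ^ K + K.*2 + 2.
Proof.
move=> le_Ka le_Kb /andP[_ dvd_phi].
have phi_gt0 n : 0 < totient n`! by rewrite totient_gt0 fact_gt0.
have := dvdn_leq_log 2 (phi_gt0 c) dvd_phi; rewrite lognM //.
have := logn2_totient_fact a; have := logn2_totient_fact b.
have := logn2_totient_fact c; have := logn2_fact_le c.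
have := logn2_fact_ge le_Ka; have := logn2_fact_ge le_Kb.
have := leq_b1 (1 < a); have := leq_b1 (1 < b); lia.
Qed.

Lemma leq_mul_div_exp2 K x : K * (x %/ 2 ^ K) <= x.
Proof.
apply: leq_trans (leq_divM x (2 ^ K)); rewrite mulnC leq_mul2l.
by rewrite ltnW ?orbT // ltn_expl.
Qed.

Lemma log2_pred_primes_small K c :
  K * log2_pred_primes c <= K * K * 2 ^ (4 * K * K).+1 + c.*2.
Proof.
have le_S : K * log2_pred_primes c <= K * K * primepi c + K * (c %/ 2 ^ K).
  by rewrite -mulnA -mulnDr leq_mul2l log2_pred_primes_le orbT.
have le_pi : K * K * primepi c <= K * K * 2 ^ (4 * K * K).+1 + c.
  by rewrite -(leq_pmul2l (isT : 0 < 4)) mulnDr !mulnA primepi_bound.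
have := leq_mul_div_exp2 K c; rewrite -addnn; lia.
Qed.

Lemma c_adm_lower_bound K : exists N, forall a b c, N <= a -> N <= b ->
  c_adm a b c -> K * (a + b) <= (K + 2) * c + 2 * (a + b).
Proof.
set D := K * K * 2 ^ (4 * K * K).+1 + K * (K.*2 + 2).
exists (maxn K D) => a b c; rewrite !geq_max => /andP[le_Ka le_Da] /andP[le_Kb _] adm.
have le_ab : K * (a + b) <= K * c + K * log2_pred_primes c
    + K * (a %/ 2 ^ K) + K * (b %/ 2 ^ K) + K * (K.*2 + 2).
  by rewrite -!mulnDr leq_mul2l !addnA c_adm_logn2 ?orbT.
have := log2_pred_primes_small K c.
have := leq_mul_div_exp2 K a; have := leq_mul_div_exp2 K b.
move: le_Da; rewrite /D; lia.
Qed.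

Local Open Scope ring_scope.

Lemma r_ab_eventually_ge (eps : rat) : 0 < eps ->
  exists N : nat, forall a b : nat, (N <= a)%N -> (N <= b)%N -> 1 - eps <= r_ab a b.
Proof.
move=> eps_gt0.
have [K lt_K] : exists K : nat, 4 / eps < K%:R.
  by exists (Num.bound (4 / eps)); apply: archi_boundP; rewrite divr_ge0 // ltW.
have K_eps : 4 < eps * K%:R by rewrite -ltr_pdivrMl // mulrC.
have [N lower] := c_adm_lower_bound K.
exists (maxn N 1) => a b; rewrite !geq_max => /andP[le_Na a_gt0] /andP[le_Nb _].
have [adm _] := c_ab_spec a b.
have := lower _ _ _ le_Na le_Nb adm; rewrite -(ler_nat rat) !natrM !natrD.
rewrite /r_ab ler_pdivlMr ?ltr0n ?addn_gt0 ?a_gt0 // natrD.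
set x := a%:R + b%:R; set c := (c_ab a b)%:R; set k := K%:R => le_Kx.
have x_gt0 : 0 < x by rewrite ltr_wpDr ?ler0n ?ltr0n.
have : 4 * x <= eps * k * x by rewrite ler_pM2r // ltW.
have : 0 <= eps * x by rewrite mulr_ge0 // ltW.
have : 0 <= c by rewrite ler0n.
nra.
Qed.

Lemma r_ab_frequently_le (eps : rat) : 0 < eps -> forall N : nat,
  exists a b : nat, [/\ (N <= a)%N, (N <= b)%N & r_ab a b <= 1 + eps].
Proof.
move=> eps_gt0 N; set k := totient N`!.
have [M lt_M] : exists M : nat, k%:R / eps < M%:R.
  by exists (Num.bound (k%:R / eps)); apply: archi_boundP; rewrite divr_ge0 // ltW.
set L := (k.+1 + M + N)%N; set B := L`!.+1.
have le_L : (M + N <= L)%N by rewrite /L -addnA leq_addl.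
have lt_MB : (M < B)%N.
  by rewrite ltnS (leq_trans _ (fact_geq L)) // (leq_trans _ le_L) ?leq_addr.
exists N, B; split => //.
  by rewrite ltnW // ltnS (leq_trans _ (fact_geq L)) // (leq_trans _ le_L) ?leq_addl.
have [_ minimal] := c_ab_spec N B.
have := minimal _ (c_adm_fact_gap (ltn_addr _ (leq_addr _ _)) (leqnn B)).
rewrite -(ler_nat rat) natrD -/k -/L -/B => le_c.
rewrite /r_ab ler_pdivrMr ?ltr0n ?addn_gt0 ?orbT // natrD.
have : k%:R < eps * M%:R by rewrite -ltr_pdivrMl // mulrC.
move: lt_MB; rewrite -(ltr_nat rat) => lt_MB.
have : eps * M%:R <= eps * B%:R by rewrite ler_pM2l // ltW.
have : 0 <= eps * N%:R by rewrite mulr_ge0 // ltW.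
have : 0 <= N%:R :> rat by rewrite ler0n.
nra.
Qed.

Theorem theorem1p2 :
  (forall eps : rat, 0 < eps ->
     exists N : nat, forall a b : nat, (N <= a)%N -> (N <= b)%N ->
       1 - eps <= r_ab a b) /\
  (forall eps : rat, 0 < eps -> forall N : nat,
     exists a b : nat, [/\ (N <= a)%N, (N <= b)%N & r_ab a b <= 1 + eps]).
Proof. split; [exact: r_ab_eventually_ge | exact: r_ab_frequently_le]. Qed.
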